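(* Let $X=[0,\bar a]$ be a nonempty interval and $f:X\to X$ satisfy: (i) $f$ is strictly concave and Lipschitz continuous; (ii) $f(x)\ge 0$ for all $x\in X$; (iii) letting $\bar x\in X$ be the point at which $f$ attains its maximum on $X$ (so $f$ is strictly increasing on $I=[0,\bar x)$ and strictly decreasing on $D=[\bar x,\bar a]$), the restriction of $f$ to $D$ is $L$-Lipschitz with $L<1$; (iv) there is a positive $b\in X$ with $f(b)<b$. Then for every $x_0\in X$, the fixed-point iteration $x_{k+1}=f(x_k)$ converges to a fixed point of $f$.
   Context: A function $f$ is $L$-Lipschitz if $|f(x)-f(y)|\le L|x-y|$ for all $x,y$; Lipschitz continuous if it is $L$-Lipschitz for some $L>0$. $f$ is strictly concave if $f((1-\lambda)x+\lambda y)>(1-\lambda)f(x)+\lambda f(y)$ for all $x\ne y$ and $0<\lambda<1$. *)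

From Stdlib Require Export Reals Lra.
Open Scope R_scope.

Definition in_Icc (lo hi x : R) : Prop := lo <= x <= hi.

Definition lipschitz_on (S : R -> Prop) (L : R) (f : R -> R) : Prop :=
  forall x y, S x -> S y -> Rabs (f x - f y) <= L * Rabs (x - y).

Definition lipschitz_continuous_on (S : R -> Prop) (f : R -> R) : Prop :=
  exists L, 0 < L /\ lipschitz_on S L f.

Definition strictly_concave_on (S : R -> Prop) (f : R -> R) : Prop :=
  forall x y lam, S x -> S y -> x <> y -> 0 < lam < 1 ->
    f ((1 - lam) * x + lam * y) > (1 - lam) * f x + lam * f y.

Fixpoint fp_iter (f : R -> R) (x0 : R) (k : nat) : R :=
  match k with
  | O => x0
  | S k' => f (fp_iter f x0 k')
  end.

From Stdlib Require Import Reals Lra Lia Classical.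
Open Scope R_scope.

(* Since f - id is concave and f 0 >= 0, the set where x <= f x is an interval
   [0, p] with f p = p, and f x < x beyond p.  If p <= xbar, f is nondecreasing
   on [0, p], so [0, p] is invariant and orbits increase there, while orbits
   staying above p decrease.  If xbar < p, the distance to p never increases
   along an orbit and shrinks by the factor L at every visit to [xbar, abar]; so
   either the orbit eventually stays below xbar, where it increases, or it
   visits [xbar, abar] infinitely often and converges to p.  In all cases the
   orbit converges, and by continuity its limit is a fixed point. *)

Lemma fp_iter_add f x m n : fp_iter f x (n + m) = fp_iter f (fp_iter f x m) n.
Proof. induction n as [|n IH]; simpl; [reflexivity | now rewrite IH]. Qed.

Lemma fp_iter_in_Icc lo hi f x0 :
  (forall x, in_Icc lo hi x -> in_Icc lo hi (f x)) ->
  in_Icc lo hi x0 -> forall k, in_Icc lo hi (fp_iter f x0 k).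
Proof. intros Hf H0 k; induction k; simpl; auto. Qed.

Lemma fp_iter_cv_tail f x0 N l :
  Un_cv (fp_iter f (fp_iter f x0 N)) l -> Un_cv (fp_iter f x0) l.
Proof.
  intros H. apply (CV_shift _ N).
  apply (Un_cv_ext (fp_iter f (fp_iter f x0 N))); [|exact H].
  intros n. now rewrite fp_iter_add.
Qed.

Lemma Un_cv_in_Icc lo hi u l :
  (forall k, in_Icc lo hi (u k)) -> Un_cv u l -> in_Icc lo hi l.
Proof.
  intros Hu Hl.
  assert (Hconst : forall c, Un_cv (fun _ => c) c).
  { intros c eps Heps. exists 0%nat. intros n _. unfold Rdist.
    rewrite Rminus_diag, Rabs_R0. exact Heps. }
  split.
  - apply (@Rle_cv_lim (fun _ => lo) u); [intros k; apply Hu | apply Hconst | exact Hl].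
  - apply (@Rle_cv_lim u (fun _ => hi)); [intros k; apply Hu | exact Hl | apply Hconst].
Qed.

Lemma Un_cv_growing_bounded u hi :
  Un_growing u -> (forall k, u k <= hi) -> exists l, Un_cv u l.
Proof.
  intros Hg Hb. destruct (growing_cv u Hg) as [l Hl]; [|now exists l].
  exists hi. intros x [k ->]. apply Hb.
Qed.

Lemma Un_cv_decreasing_bounded u lo :
  Un_decreasing u -> (forall k, lo <= u k) -> exists l, Un_cv u l.
Proof.
  intros Hd Hb. destruct (decreasing_cv u Hd) as [l Hl]; [|now exists l].
  exists (- lo). intros x [k ->]. unfold opp_seq. specialize (Hb k). lra.
Qed.

Lemma Un_cv_0_eventual_contractions d L :
  0 <= L < 1 -> (forall k, 0 <= d k) -> Un_decreasing d ->
  (forall N, exists k, (N <= k)%nat /\ d (S k) <= L * d k) ->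
  Un_cv d 0.
Proof.
  intros HL Hpos Hdec Hinf.
  assert (Hpow : forall n, exists N, forall k, (N <= k)%nat -> d k <= L ^ n * d 0%nat).
  { induction n as [|n [N HN]].
    - exists 0%nat. intros k Hk. rewrite pow_O, Rmult_1_l.
      exact (decreasing_prop d 0 k Hdec Hk).
    - destruct (Hinf N) as [k [Hk Hcontr]]. exists (S k). intros j Hj.
      apply (Rle_trans _ (d (S k))); [exact (decreasing_prop d _ _ Hdec Hj)|].
      apply (Rle_trans _ (L * d k)); [exact Hcontr|].
      rewrite <- tech_pow_Rmult, Rmult_assoc.
      apply Rmult_le_compat_l; [lra | now apply HN]. }
  intros eps Heps.
  destruct (pow_lt_1_zero L ltac:(rewrite Rabs_pos_eq; lra) (eps / (d 0%nat + 1)))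
    as [M HM].
  { apply Rdiv_lt_0_compat; [exact Heps | specialize (Hpos 0%nat); lra]. }
  destruct (Hpow M) as [N HN]. exists N. intros k Hk. unfold Rdist.
  rewrite Rminus_0_r, Rabs_pos_eq by apply Hpos.
  specialize (HN k Hk). specialize (HM M (Nat.le_refl M)).
  rewrite Rabs_pos_eq in HM by (apply pow_le; lra).
  assert (H0 := Hpos 0%nat).
  assert (Hq : eps / (d 0%nat + 1) * (d 0%nat + 1) = eps) by (field; lra).
  nra.
Qed.

Lemma Un_cv_of_dist_cv_0 u p :
  Un_cv (fun k => Rabs (u k - p)) 0 -> Un_cv u p.
Proof.
  intros H eps Heps. destruct (H eps Heps) as [N HN]. exists N. intros n Hn.
  specialize (HN n Hn). unfold Rdist in *. now rewrite Rminus_0_r, Rabs_Rabsolu in HN.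
Qed.

Lemma lipschitz_on_le S L L' f :
  L <= L' -> lipschitz_on S L f -> lipschitz_on S L' f.
Proof.
  intros HLL' Hf x y Hx Hy. apply (Rle_trans _ (L * Rabs (x - y))); [now apply Hf|].
  apply Rmult_le_compat_r; [apply Rabs_pos | exact HLL'].
Qed.

Lemma lipschitz_on_sub_id S K f :
  lipschitz_on S K f -> lipschitz_on S (K + 1) (fun x => f x - x).
Proof.
  intros Hf x y Hx Hy.
  replace (f x - x - (f y - y)) with ((f x - f y) - (x - y)) by ring.
  apply (Rle_trans _ _ _ (Rabs_triang _ _)). rewrite Rabs_Ropp.
  specialize (Hf x y Hx Hy). lra.
Qed.

Lemma lipschitz_on_opp S K g :
  lipschitz_on S K g -> lipschitz_on S K (fun x => - g x).
Proof.
  intros Hg x y Hx Hy. replace (- g x - - g y) with (- (g x - g y)) by ring.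
  rewrite Rabs_Ropp. now apply Hg.
Qed.

Lemma lipschitz_on_cv S K f u l :
  lipschitz_on S K f -> (forall k, S (u k)) -> S l ->
  Un_cv u l -> Un_cv (fun k => f (u k)) (f l).
Proof.
  intros Hf Hu Hl Hcv eps Heps.
  destruct (Hcv (eps / (Rabs K + 1))) as [N HN].
  { apply Rdiv_lt_0_compat; [exact Heps | pose proof (Rabs_pos K); lra]. }
  exists N. intros n Hn. specialize (HN n Hn). unfold Rdist in *.
  pose proof (Hf (u n) l (Hu n) Hl) as Hlip.
  assert (HK : K * Rabs (u n - l) <= Rabs K * Rabs (u n - l))
    by (apply Rmult_le_compat_r; [apply Rabs_pos | apply RRle_abs]).
  assert (Hq : eps / (Rabs K + 1) * (Rabs K + 1) = eps)
    by (field; pose proof (Rabs_pos K); lra).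
  pose proof (Rabs_pos K). pose proof (Rabs_pos (u n - l)). nra.
Qed.

Lemma lipschitz_on_ge_of_nearby S K g p c :
  0 <= K -> lipschitz_on S K g -> S p ->
  (forall eps, 0 < eps -> exists x, S x /\ Rabs (x - p) <= eps /\ c <= g x) ->
  c <= g p.
Proof.
  intros HK Hg Hp Hnear. apply Rle_plus_epsilon. intros eps Heps.
  destruct (Hnear (eps / (K + 1))) as [x [Hx [Hxp Hcx]]].
  { apply Rdiv_lt_0_compat; lra. }
  pose proof (Hg x p Hx Hp) as Hlip. pose proof (RRle_abs (g x - g p)).
  assert (K * Rabs (x - p) <= K * (eps / (K + 1))) by (apply Rmult_le_compat_l; lra).
  assert (K * (eps / (K + 1)) <= eps).
  { apply (Rmult_le_reg_r (K + 1)); [lra|].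
    replace (K * (eps / (K + 1)) * (K + 1)) with (K * eps) by (field; lra). nra. }
  lra.
Qed.

Lemma fp_iter_limit_fixed lo hi f K x0 l :
  (forall x, in_Icc lo hi x -> in_Icc lo hi (f x)) ->
  lipschitz_on (in_Icc lo hi) K f -> in_Icc lo hi x0 ->
  Un_cv (fp_iter f x0) l -> in_Icc lo hi l /\ f l = l.
Proof.
  intros Hf HK H0 Hcv.
  pose proof (fp_iter_in_Icc lo hi f x0 Hf H0) as Hin.
  assert (Hl : in_Icc lo hi l) by exact (Un_cv_in_Icc lo hi _ l Hin Hcv).
  split; [exact Hl|].
  apply (UL_sequence (fun k => fp_iter f x0 (S k))).
  - exact (lipschitz_on_cv _ K f _ l HK Hin Hl Hcv).
  - apply (CV_shift' _ 1) in Hcv.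
    apply (Un_cv_ext (fun k => fp_iter f x0 (k + 1))); [|exact Hcv].
    intros k. now rewrite Nat.add_1_r.
Qed.

Section Concavity.

Variables (lo hi : R) (f : R -> R).
Hypothesis Hconc : strictly_concave_on (in_Icc lo hi) f.

Lemma strictly_concave_chord x z y :
  in_Icc lo hi x -> in_Icc lo hi y -> x <= z <= y ->
  (y - z) * f x + (z - x) * f y <= (y - x) * f z.
Proof.
  intros Hx Hy Hz.
  destruct (Req_dec z x) as [->|Hzx]; [right; ring|].
  destruct (Req_dec z y) as [->|Hzy]; [right; ring|].
  set (lam := (z - x) / (y - x)).
  assert (Hlam : 0 < lam < 1).
  { unfold lam; split; [apply Rdiv_lt_0_compat; lra|].
    apply (Rmult_lt_reg_r (y - x)); [lra|]. field_simplify; lra. }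
  assert (Hzlam : (1 - lam) * x + lam * y = z) by (unfold lam; field; lra).
  pose proof (Hconc x y lam Hx Hy ltac:(lra) Hlam) as Hc. rewrite Hzlam in Hc.
  replace ((y - z) * f x + (z - x) * f y)
    with ((y - x) * ((1 - lam) * f x + lam * f y)) by (unfold lam; field; lra).
  apply Rmult_le_compat_l; lra.
Qed.

Lemma strictly_concave_nondecreasing_below_max m x z :
  in_Icc lo hi m -> (forall y, in_Icc lo hi y -> f y <= f m) ->
  lo <= x -> x <= z <= m -> f x <= f z.
Proof.
  intros Hm Hmax Hx Hz. destruct Hm as [Hm1 Hm2].
  assert (Hxin : in_Icc lo hi x) by (split; lra).
  pose proof (strictly_concave_chord x z m Hxin (conj Hm1 Hm2) Hz) as Hc.
  pose proof (Hmax x Hxin).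
  destruct (Req_dec x m) as [->|Hxm]; [assert (z = m) as -> by lra; lra|].
  assert ((z - x) * f x <= (z - x) * f m) by (apply Rmult_le_compat_l; lra).
  apply (Rmult_le_reg_l (m - x)); lra.
Qed.

Lemma strictly_concave_above_diagonal y z :
  in_Icc lo hi y -> lo <= f lo -> y <= f y -> lo <= z <= y -> z <= f z.
Proof.
  intros Hy Hlo Hfy Hz.
  assert (Hloin : in_Icc lo hi lo) by (destruct Hy; split; lra).
  pose proof (strictly_concave_chord lo z y Hloin Hy Hz) as Hc.
  destruct (Req_dec y lo) as [->|Hylo]; [assert (z = lo) as -> by lra; exact Hlo|].
  assert ((y - z) * lo <= (y - z) * f lo) by (apply Rmult_le_compat_l; lra).
  assert ((z - lo) * y <= (z - lo) * f y) by (apply Rmult_le_compat_l; lra).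
  apply (Rmult_le_reg_l (y - lo)); nra.
Qed.

End Concavity.

Lemma lipschitz_on_fixed_of_sign_change lo hi f K p :
  0 <= K -> lipschitz_on (in_Icc lo hi) K f -> in_Icc lo hi p ->
  lo <= f lo -> f hi <= hi ->
  (forall x, lo <= x < p -> x <= f x) -> (forall x, p < x <= hi -> f x < x) ->
  f p = p.
Proof.
  intros HK Hlip [Hlop Hphi] Hlo Hhi Hbelow Habove.
  assert (Hdisp : lipschitz_on (in_Icc lo hi) (K + 1) (fun x => f x - x))
    by now apply lipschitz_on_sub_id.
  assert (Hle : 0 <= f p - p).
  { apply (lipschitz_on_ge_of_nearby (in_Icc lo hi) (K + 1) (fun x => f x - x) p 0);
      [lra | exact Hdisp | split; lra|].
    intros eps Heps. exists (Rmax lo (p - eps)).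
    destruct (Rle_lt_or_eq_dec lo p Hlop) as [Hlop' | <-].
    - assert (Hx : lo <= Rmax lo (p - eps) < p)
        by (split; [apply Rmax_l | apply Rmax_lub_lt; lra]).
      pose proof (Rmax_r lo (p - eps)). pose proof (Hbelow _ Hx).
      split; [split; lra|]. rewrite Rabs_left by lra. split; lra.
    - rewrite Rmax_left, Rminus_diag, Rabs_R0 by lra. split; [split|]; lra. }
  assert (Hge : 0 <= - (f p - p)).
  { apply (lipschitz_on_ge_of_nearby (in_Icc lo hi) (K + 1) (fun x => - (f x - x)) p 0);
      [lra | now apply lipschitz_on_opp | split; lra|].
    intros eps Heps. exists (Rmin hi (p + eps)).
    destruct (Rle_lt_or_eq_dec p hi Hphi) as [Hphi' | ->].
    - assert (Hx : p < Rmin hi (p + eps) <= hi)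
        by (split; [apply Rmin_glb_lt; lra | apply Rmin_l]).
      pose proof (Rmin_r hi (p + eps)). pose proof (Habove _ Hx).
      split; [split; lra|]. rewrite Rabs_right by lra. split; lra.
    - rewrite Rmin_left, Rminus_diag, Rabs_R0 by lra. split; [split|]; lra. }
  lra.
Qed.

Definition diagonal_crossing (lo hi : R) (f : R -> R) (p : R) : Prop :=
  in_Icc lo hi p /\ f p = p /\
  (forall x, lo <= x <= p -> x <= f x) /\ (forall x, p < x <= hi -> f x < x).

Lemma exists_diagonal_crossing lo hi f K :
  lo <= hi -> 0 <= K ->
  (forall x, in_Icc lo hi x -> in_Icc lo hi (f x)) ->
  strictly_concave_on (in_Icc lo hi) f -> lipschitz_on (in_Icc lo hi) K f ->
  exists p, diagonal_crossing lo hi f p.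
Proof.
  intros Hlohi HK Hf Hconc Hlip.
  assert (Hlo : lo <= f lo) by (apply Hf; split; lra).
  assert (Hhi : f hi <= hi) by (apply Hf; split; lra).
  set (E := fun x => in_Icc lo hi x /\ x <= f x).
  destruct (completeness E) as [p [Hub Hlub]].
  { exists hi. intros x [[_ H] _]. exact H. }
  { exists lo. split; [split; lra | exact Hlo]. }
  assert (Hp : in_Icc lo hi p).
  { split; [apply Hub; split; [split; lra | exact Hlo]|].
    apply Hlub. intros x [[_ H] _]. exact H. }
  assert (Hbelow : forall x, lo <= x < p -> x <= f x).
  { intros x Hx. destruct (classic (exists y, E y /\ x < y)) as [[y [[Hy Hfy] Hxy]]|Hn].
    - exact (strictly_concave_above_diagonal lo hi f Hconc y x Hy Hlo Hfy ltac:(lra)).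
    - assert (p <= x); [|lra]. apply Hlub. intros z Hz.
      apply Rnot_lt_le. intros Hxz. apply Hn. now exists z. }
  assert (Habove : forall x, p < x <= hi -> f x < x).
  { intros x Hx. apply Rnot_le_lt. intros Hfx.
    assert (x <= p) by (destruct Hp; apply Hub; split; [split|]; lra). lra. }
  pose proof (lipschitz_on_fixed_of_sign_change lo hi f K p HK Hlip Hp Hlo Hhi
                Hbelow Habove) as Hfp.
  exists p. split; [exact Hp|]. split; [exact Hfp|]. split; [|exact Habove].
  intros x Hx. destruct (Req_dec x p) as [->|Hxp]; [lra | apply Hbelow; lra].
Qed.

Section Convergence.

Variables (a xbar p : R) (f : R -> R).
Hypothesis Hmaps : forall x, in_Icc 0 a x -> in_Icc 0 a (f x).
Hypothesis Hconc : strictly_concave_on (in_Icc 0 a) f.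
Hypothesis Hxbar : in_Icc 0 a xbar.
Hypothesis Hmax : forall x, in_Icc 0 a x -> f x <= f xbar.
Hypothesis Hp : diagonal_crossing 0 a f p.

Lemma fp_iter_cv_crossing_le_max x0 :
  p <= xbar -> in_Icc 0 a x0 -> exists l, Un_cv (fp_iter f x0) l.
Proof.
  intros Hpx Hx0. destruct Hp as [[Hp0 Hpa] [Hfp [Hbelow Habove]]].
  pose proof (fp_iter_in_Icc 0 a f x0 Hmaps Hx0) as Hin.
  destruct (classic (exists N, fp_iter f x0 N <= p)) as [[N HN]|Hn].
  - assert (Hup : forall x, in_Icc 0 p x -> x <= f x)
      by (intros x Hx; apply Hbelow, Hx).
    assert (Hinv : forall x, in_Icc 0 p x -> in_Icc 0 p (f x)).
    { intros x Hx. pose proof (Hup x Hx). destruct Hx. split; [lra|].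
      rewrite <- Hfp.
      now apply (strictly_concave_nondecreasing_below_max 0 a f Hconc xbar). }
    assert (HyN : in_Icc 0 p (fp_iter f x0 N)) by (split; [apply Hin | exact HN]).
    pose proof (fp_iter_in_Icc 0 p f _ Hinv HyN) as Hy.
    destruct (Un_cv_growing_bounded (fp_iter f (fp_iter f x0 N)) p) as [l Hl].
    + intros k. apply Hup, Hy.
    + intros k. apply Hy.
    + exists l. exact (fp_iter_cv_tail f x0 N l Hl).
  - apply (Un_cv_decreasing_bounded _ 0); [|intros k; apply Hin].
    intros k. apply Rlt_le, Habove. split; [|apply Hin].
    apply Rnot_le_lt. intros Hk. apply Hn. now exists k.
Qed.

Variable L : R.
Hypothesis HL : 0 <= L < 1.
Hypothesis HLD : lipschitz_on (in_Icc xbar a) L f.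

Lemma dist_crossing_nonincreasing x :
  xbar < p -> in_Icc 0 a x -> Rabs (f x - p) <= Rabs (x - p).
Proof.
  intros Hpx Hx. destruct Hp as [[Hp0 Hpa] [Hfp [Hbelow _]]].
  pose proof Hx as [Hx0 Hxa]. pose proof Hxbar as [Hxbar0 Hxbara].
  destruct (Rle_lt_dec xbar x) as [Hxx|Hxx].
  - rewrite <- Hfp at 1. apply (Rle_trans _ (L * Rabs (x - p))).
    + apply HLD; split; lra.
    + pose proof (Rabs_pos (x - p)). nra.
  - assert (Hfxbar : f xbar <= p + L * (p - xbar)).
    { pose proof (HLD xbar p ltac:(split; lra) ltac:(split; lra)) as Hlip.
      rewrite Hfp, (Rabs_left (xbar - p)) in Hlip by lra.
      pose proof (RRle_abs (f xbar - p)). lra. }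
    (* x <= f x <= f xbar <= p + L (p - xbar) <= p + (p - x) *)
    pose proof (Hbelow x ltac:(lra)). pose proof (Hmax x Hx).
    rewrite (Rabs_left (x - p)) by lra. apply Rabs_le. nra.
Qed.

Lemma fp_iter_cv_crossing_gt_max x0 :
  xbar < p -> in_Icc 0 a x0 -> exists l, Un_cv (fp_iter f x0) l.
Proof.
  intros Hpx Hx0. pose proof (fp_iter_in_Icc 0 a f x0 Hmaps Hx0) as Hin.
  destruct (classic (exists N, forall k, (N <= k)%nat -> fp_iter f x0 k < xbar))
    as [[N HN]|Hn].
  - destruct Hp as [_ [_ [Hbelow _]]].
    assert (Htail : forall k, 0 <= fp_iter f (fp_iter f x0 N) k < xbar).
    { intros k. rewrite <- fp_iter_add. split; [apply Hin | apply HN; lia]. }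
    destruct (Un_cv_growing_bounded (fp_iter f (fp_iter f x0 N)) xbar) as [l Hl].
    + intros k. simpl. apply Hbelow. specialize (Htail k). lra.
    + intros k. apply Rlt_le, Htail.
    + exists l. exact (fp_iter_cv_tail f x0 N l Hl).
  - exists p. apply Un_cv_of_dist_cv_0, (Un_cv_0_eventual_contractions _ L HL).
    + intros k. apply Rabs_pos.
    + intros k. simpl. apply dist_crossing_nonincreasing; [exact Hpx | apply Hin].
    + intros N. apply NNPP. intros Hc. apply Hn. exists N. intros k Hk.
      apply Rnot_le_lt. intros Hxk. apply Hc. exists k. split; [exact Hk|].
      destruct Hp as [[Hp0 Hpa] [Hfp _]]. simpl. rewrite <- Hfp at 1.
      apply HLD; split; [exact Hxk | apply Hin | lra | exact Hpa].
Qed.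

End Convergence.

Theorem mainTheorem8 (abar : R) (f : R -> R) (xbar : R) :
  0 <= abar ->
  (* f : X -> X with X = [0, abar] *)
  (forall x, in_Icc 0 abar x -> in_Icc 0 abar (f x)) ->
  (* (i) *)
  strictly_concave_on (in_Icc 0 abar) f ->
  lipschitz_continuous_on (in_Icc 0 abar) f ->
  (* (ii) *)
  (forall x, in_Icc 0 abar x -> 0 <= f x) ->
  (* (iii) xbar is the maximizer of f on X, and f restricted to D = [xbar, abar]
     is L-Lipschitz with L < 1 *)
  in_Icc 0 abar xbar ->
  (forall x, in_Icc 0 abar x -> f x <= f xbar) ->
  (exists L, L < 1 /\ lipschitz_on (in_Icc xbar abar) L f) ->
  (* (iv) *)
  (exists b, in_Icc 0 abar b /\ 0 < b /\ f b < b) ->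
  forall x0, in_Icc 0 abar x0 ->
    exists xs, in_Icc 0 abar xs /\ f xs = xs /\ Un_cv (fp_iter f x0) xs.
Proof.
  (* (ii) follows from f mapping X into X. *)
  intros Ha Hmaps Hconc [K [HK HLip]] _ Hxbar Hmax [L [HL HLD]] _ x0 Hx0.
  destruct (exists_diagonal_crossing 0 abar f K Ha (Rlt_le _ _ HK) Hmaps Hconc HLip)
    as [p Hp].
  assert (HLD' : lipschitz_on (in_Icc xbar abar) (Rmax 0 L) f)
    by exact (lipschitz_on_le _ L _ f (Rmax_r 0 L) HLD).
  assert (HL' : 0 <= Rmax 0 L < 1) by (split; [apply Rmax_l | apply Rmax_lub_lt; lra]).
  assert (Hcv : exists l, Un_cv (fp_iter f x0) l).
  { destruct (Rle_lt_dec p xbar) as [Hpx | Hpx].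
    - exact (fp_iter_cv_crossing_le_max abar xbar p f Hmaps Hconc Hxbar Hmax Hp
               x0 Hpx Hx0).
    - exact (fp_iter_cv_crossing_gt_max abar xbar p f Hmaps Hxbar Hmax Hp
               (Rmax 0 L) HL' HLD' x0 Hpx Hx0). }
  destruct Hcv as [l Hl].
  destruct (fp_iter_limit_fixed 0 abar f K x0 l Hmaps HLip Hx0 Hl) as [Hlin Hfl].
  now exists l.
Qed.
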